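(* Let $\Sigma$ be a finite alphabet, $n$ a positive integer, $u,v\in\Sigma^\star$, and $r\in R_n(u)\cap R_n(v)$. Let $i_1,i_2\in[1,|u|]$ and $j_1,j_2\in[1,|v|]$ with $\operatorname{ord}(i_1,r(u))\ne\operatorname{ord}(j_1,r(v))$. Then Samson has a winning strategy in the game $\mathrm{FO}^2_n((u,i_1,i_2),(v,j_1,j_2))$.
   Context: Game $\mathrm{FO}^2_n((u,i_1,i_2),(v,j_1,j_2))$: pebble pair $x$ starts on $i_1$ in $u$ and $j_1$ in $v$, pebble pair $y$ on $i_2$ in $u$ and $j_2$ in $v$. In each of $n$ rounds Samson picks $z\in\{x,y\}$ and places one $z$-pebble on a position of one of the words (either one); Delilah places the other $z$-pebble on a position of the other word. Samson wins if initially or after some round the map $x^u\mapsto x^v$, $y^u\mapsto y^v$ is not a partial isomorphism (pebbled letters differ, or $\operatorname{ord}(x^u,y^u)\ne\operatorname{ord}(x^v,y^v)$); otherwise Delilah wins. Boundary positions: $\triangleright_a(w)=\min\{i:w_i=a\}$, $\triangleleft_a(w)=\max\{i:w_i=a\}$, $\triangleright_a(w,q)=\min\{i\in[q+1,|w|]:w_i=a\}$, $\triangleleft_a(w,q)=\max\{i\in[1,q-1]:w_i=a\}$ (undefined if empty). An $n$-ranker is a sequence $r=(p_1,\dots,p_n)$ of boundary positions with $r(w)=p_1(w)$ if $n=1$, undefined if $(p_1,\dots,p_{n-1})(w)$ is undefined, else $p_n(w,(p_1,\dots,p_{n-1})(w))$. $R_n(w)$ is the set of $n$-rankers defined over $w$.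 $\operatorname{ord}(i,j)\in\{<,=,>\}$ is the order type of $i,j$. *)

From mathcomp Require Import all_boot.
Set Implicit Arguments. Unset Strict Implicit. Unset Printing Implicit Defensive.

Section Words.
Variable Sigma : finType.

(* Positions of a word are 1-indexed: w_i for i in [1, |w|]. *)
Definition letter (w : seq Sigma) (i : nat) : option Sigma :=
  nth None (map Some w) i.-1.

Definition valid_pos (w : seq Sigma) (i : nat) : Prop := 1 <= i <= size w.

Definition minpos (w : seq Sigma) (a : Sigma) (lo hi : nat) : option nat :=
  head None [seq Some i | i <- iota lo (hi.+1 - lo) & letter w i == Some a].
Definition maxpos (w : seq Sigma) (a : Sigma) (lo hi : nat) : option nat :=
  last None [seq Some i | i <- iota lo (hi.+1 - lo) & letter w i == Some a].

(* A boundary position is (true, a) for |>_a and (false, a) for <|_a. *)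
Definition bpos := (bool * Sigma)%type.

Definition bp_first (w : seq Sigma) (p : bpos) : option nat :=
  if p.1 then minpos w p.2 1 (size w) else maxpos w p.2 1 (size w).

Definition bp_from (w : seq Sigma) (p : bpos) (q : nat) : option nat :=
  if p.1 then minpos w p.2 q.+1 (size w) else maxpos w p.2 1 q.-1.

Definition ranker_eval (w : seq Sigma) (r : seq bpos) : option nat :=
  match r with
  | [::] => None
  | p :: ps => foldl (fun acc p' => obind (bp_from w p') acc) (bp_first w p) ps
  end.

Definition in_R (n : nat) (w : seq Sigma) (r : seq bpos) : Prop :=
  size r = n /\ ranker_eval w r <> None.

Definition ord (i j : nat) : comparison := Nat.compare i j.

Definition partial_iso (u v : seq Sigma) (xu yu xv yv : nat) : Prop :=
  letter u xu = letter v xv /\ letter u yu = letter v yv /\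
  ord xu yu = ord xv yv.

Fixpoint samson_wins (u v : seq Sigma) (k : nat) (xu yu xv yv : nat) : Prop :=
  ~ partial_iso u v xu yu xv yv \/
  match k with
  | 0 => False
  | k'.+1 =>
      (exists p, valid_pos u p /\
         forall q, valid_pos v q -> samson_wins u v k' p yu q yv) \/
      (exists p, valid_pos v p /\
         forall q, valid_pos u q -> samson_wins u v k' q yu p yv) \/
      (exists p, valid_pos u p /\
         forall q, valid_pos v q -> samson_wins u v k' xu p xv q) \/
      (exists p, valid_pos v p /\
         forall q, valid_pos u q -> samson_wins u v k' xu q xv p)
  end.

End Words.

(* Let the last step of r be |>_a (the case <|_a is
   symmetric), let su, sv be the values of r in u, v and ru, rv those of its
   prefix, so that no a occurs strictly between ru and su in u (resp. rv, sv
   in v).  Ordering the comparisons Lt < Eq < Gt, assume ord(i1, su) is below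
   ord(j1, sv) (otherwise exchange the words).  Samson puts pebble y on sv.
   An answer q with the right letter and ord(i1, q) = ord(j1, sv) lies
   strictly before su, hence at or before ru; since sv lies after rv, the
   pebbles on q and sv now differ in their order relative to the prefix
   ranker, and the induction hypothesis applies with the roles of the pebbles
   exchanged. *)

From mathcomp Require Import all_boot zify.
From Stdlib Require Import PeanoNat.
Set Implicit Arguments. Unset Strict Implicit.
Set Bullet Behavior "Strict Subproofs".

Lemma ordE i j : ord i j = if i < j then Lt else if i == j then Eq else Gt.
Proof.
rewrite /ord; case: ltngtP => h.
- by apply/Nat.compare_lt_iff/ltP.
- by apply/Nat.compare_gt_iff/ltP.
- by rewrite h Nat.compare_refl.
Qed.

Lemma ord_GtP i j : reflect (ord i j = Gt) (j < i).
Proof. by rewrite ordE; case: ltngtP => h; constructor. Qed.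

Lemma ord_LtP i j : reflect (ord i j = Lt) (i < j).
Proof. by rewrite ordE; case: ltngtP => h; constructor. Qed.

Definition cmp_rank (c : comparison) : nat :=
  match c with Lt => 0 | Eq => 1 | Gt => 2 end.

Lemma cmp_rank_inj : injective cmp_rank.
Proof. by case; case. Qed.

Lemma cmp_rank_ord_anti i q q' :
  q <= q' -> cmp_rank (ord i q') <= cmp_rank (ord i q).
Proof.
by rewrite !ordE => hq; case: (ltngtP i q); case: (ltngtP i q') => //=; lia.
Qed.

Section Game.
Variable Sigma : finType.
Implicit Types u v w : seq Sigma.

Lemma samson_wins_not_iso u v k a b c d :
  ~ partial_iso u v a b c d -> samson_wins u v k a b c d.
Proof. by case: k => [|k] h; left. Qed.

Lemma samson_wins_swap_words u v k a b c d :
  samson_wins u v k a b c d -> samson_wins v u k c d a b.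
Proof.
have iso_sym a' b' c' d' :
    ~ partial_iso u v a' b' c' d' -> ~ partial_iso v u c' d' a' b'.
  by move=> h [h1 [h2 h3]]; apply: h.
elim: k a b c d => [|k IH] a b c d /=.
  by case=> // h; left; apply: iso_sym.
case=> [h|[[p [Vp H]]|[[p [Vp H]]|[[p [Vp H]]|[p [Vp H]]]]]].
- by left; apply: iso_sym.
- by do 2 right; left; exists p; split=> // q Vq; apply: IH; apply: H.
- by right; left; exists p; split=> // q Vq; apply: IH; apply: H.
- by do 4 right; exists p; split=> // q Vq; apply: IH; apply: H.
- by do 3 right; left; exists p; split=> // q Vq; apply: IH; apply: H.
Qed.

Lemma samson_wins_swap_pebbles u v k a b c d :
  samson_wins u v k a b c d -> samson_wins u v k b a d c.
Proof.
have iso_sym a' b' c' d' :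
    ~ partial_iso u v a' b' c' d' -> ~ partial_iso u v b' a' d' c'.
  move=> h [h1 [h2 h3]]; apply: h; do 2 split=> //.
  by rewrite /ord Nat.compare_antisym [RHS]Nat.compare_antisym; congr CompOpp.
elim: k a b c d => [|k IH] a b c d /=.
  by case=> // h; left; apply: iso_sym.
case=> [h|[[p [Vp H]]|[[p [Vp H]]|[[p [Vp H]]|[p [Vp H]]]]]].
- by left; apply: iso_sym.
- by do 3 right; left; exists p; split=> // q Vq; apply: IH; apply: H.
- by do 4 right; exists p; split=> // q Vq; apply: IH; apply: H.
- by right; left; exists p; split=> // q Vq; apply: IH; apply: H.
- by do 2 right; left; exists p; split=> // q Vq; apply: IH; apply: H.
Qed.

Lemma samson_wins_min_step u v k a i1 j1 ru su sv :
  valid_pos v sv -> letter v sv = Some a ->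
  (forall q, ru < q < su -> letter u q <> Some a) ->
  (forall q, valid_pos u q -> q <= ru -> samson_wins u v k i1 q j1 sv) ->
  cmp_rank (ord i1 su) < cmp_rank (ord j1 sv) ->
  forall i2 j2, samson_wins u v k.+1 i1 i2 j1 j2.
Proof.
move=> Vsv Lsv gap H Hrank i2 j2 /=; do 4 right; exists sv; split=> // q Vq.
have [|q_after] := leqP q ru; first exact: H.
apply: samson_wins_not_iso => -[_ [Lq Oq]].
have q_before : q < su.
  rewrite ltnNge; apply: contraTN Hrank => /(cmp_rank_ord_anti i1).
  by rewrite Oq -leqNgt.
by apply: (gap q); rewrite ?q_after ?q_before ?Lq.
Qed.

Lemma samson_wins_max_step u v k a i1 j1 ru su sv :
  valid_pos v sv -> letter v sv = Some a ->
  (forall q, su < q < ru -> letter u q <> Some a) ->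
  (forall q, valid_pos u q -> ru <= q -> samson_wins u v k i1 q j1 sv) ->
  cmp_rank (ord j1 sv) < cmp_rank (ord i1 su) ->
  forall i2 j2, samson_wins u v k.+1 i1 i2 j1 j2.
Proof.
move=> Vsv Lsv gap H Hrank i2 j2 /=; do 4 right; exists sv; split=> // q Vq.
have [|q_before] := leqP ru q; first exact: H.
apply: samson_wins_not_iso => -[_ [Lq Oq]].
have q_after : su < q.
  rewrite ltnNge; apply: contraTN Hrank => /(cmp_rank_ord_anti i1).
  by rewrite Oq -leqNgt.
by apply: (gap q); rewrite ?q_after ?q_before ?Lq.
Qed.

Lemma letter_valid w i a : letter w i = Some a -> 0 < i -> valid_pos w i.
Proof.
rewrite /letter /valid_pos => + i_gt0; case: (ltnP i.-1 (size w)) => h.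
  by move=> _; lia.
by rewrite nth_default // size_map.
Qed.

Lemma head_filter_iota (P : pred nat) n lo s :
  head None [seq Some i | i <- iota lo n & P i] = Some s ->
  [/\ lo <= s < lo + n, P s & forall x, lo <= x < s -> ~~ P x].
Proof.
elim: n lo => [|n IH] lo //=; case: ifP => Plo /=.
  by case=> <-; split=> //; [lia | move=> x; lia].
move/IH=> [hs Ps gap]; split=> //; first lia.
move=> x hx; have [->|ne] := eqVneq x lo; first by rewrite Plo.
by apply: gap; lia.
Qed.

Lemma last_filter_iota (P : pred nat) n lo s :
  last None [seq Some i | i <- iota lo n & P i] = Some s ->
  [/\ lo <= s < lo + n, P s & forall x, s < x < lo + n -> ~~ P x].
Proof.
elim: n => [|n IH] //; rewrite -addn1 iotaD filter_cat map_cat last_cat /=.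
case: ifP => Pn /=.
  by case=> <-; split=> //; [lia | move=> x; lia].
move/IH=> [hs Ps gap]; split=> //; first lia.
move=> x hx; have [->|ne] := eqVneq x (lo + n); first by rewrite Pn.
by apply: gap; lia.
Qed.

Lemma bp_from_min w a q s : bp_from w (true, a) q = Some s ->
  [/\ valid_pos w s, q < s, letter w s = Some a &
      forall x, q < x < s -> letter w x <> Some a].
Proof.
move/head_filter_iota=> [hs /eqP Ls gap]; split=> //; first 2 last.
- by move=> x hx; apply/eqP/gap.
- by apply: letter_valid Ls _; lia.
- by lia.
Qed.

Lemma bp_from_max w a q s : bp_from w (false, a) q = Some s ->
  [/\ valid_pos w s, s < q, letter w s = Some a &
      forall x, s < x < q -> letter w x <> Some a].
Proof.
move/last_filter_iota=> [hs /eqP Ls gap]; split=> //; first 2 last.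
- by move=> x hx; apply/eqP/gap; lia.
- by apply: letter_valid Ls _; lia.
- by lia.
Qed.

Lemma bp_from_valid w p q s : bp_from w p q = Some s -> valid_pos w s.
Proof. by case: p => -[] a; [case/bp_from_min | case/bp_from_max]. Qed.

(* |>_a(w) = |>_a(w, 0) and <|_a(w) = <|_a(w, |w| + 1). *)
Definition bp_origin w (p : bpos Sigma) : nat := if p.1 then 0 else (size w).+1.

Lemma bp_first_origin w p : bp_first w p = bp_from w p (bp_origin w p).
Proof. by case: p => [[] a]. Qed.

Lemma ord_bp_origin w p q :
  valid_pos w q -> ord q (bp_origin w p) = if p.1 then Gt else Lt.
Proof.
by rewrite /valid_pos => Vq; case: p => -[] a; rewrite /bp_origin ordE /=;
  case: ltngtP => //; lia.
Qed.

Lemma samson_wins_bp_from u v k p i1 j1 ru rv su sv :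
  bp_from u p ru = Some su -> bp_from v p rv = Some sv ->
  (forall q, valid_pos u q -> ord q ru <> ord sv rv ->
     samson_wins u v k i1 q j1 sv) ->
  (forall q, valid_pos v q -> ord su ru <> ord q rv ->
     samson_wins u v k i1 su j1 q) ->
  ord i1 su <> ord j1 sv -> forall i2 j2, samson_wins u v k.+1 i1 i2 j1 j2.
Proof.
move=> Eu Ev Hu Hv Hord i2 j2.
have : cmp_rank (ord i1 su) != cmp_rank (ord j1 sv).
  by apply/eqP => /cmp_rank_inj.
rewrite neq_ltn; case: p Eu Ev => -[] a Eu Ev.
- have [Vsu ru_su Lsu gap_u] := bp_from_min Eu.
  have [Vsv rv_sv Lsv gap_v] := bp_from_min Ev.
  case/orP=> Hrank.
    apply: (samson_wins_min_step Vsv Lsv gap_u _ Hrank) => q Vq q_le.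
    by apply: Hu => //; rewrite (ord_GtP _ _ rv_sv) => /ord_GtP; lia.
  apply/samson_wins_swap_words.
  apply: (samson_wins_min_step Vsu Lsu gap_v _ Hrank).
  move=> q Vq q_le; apply/samson_wins_swap_words/Hv => //.
  by rewrite (ord_GtP _ _ ru_su) => /esym /ord_GtP; lia.
- have [Vsu su_ru Lsu gap_u] := bp_from_max Eu.
  have [Vsv sv_rv Lsv gap_v] := bp_from_max Ev.
  case/orP=> Hrank.
    apply/samson_wins_swap_words.
    apply: (samson_wins_max_step Vsu Lsu gap_v _ Hrank).
    move=> q Vq q_ge; apply/samson_wins_swap_words/Hv => //.
    by rewrite (ord_LtP _ _ su_ru) => /esym /ord_LtP; lia.
  apply: (samson_wins_max_step Vsv Lsv gap_u _ Hrank) => q Vq q_ge.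
  by apply: Hu => //; rewrite (ord_LtP _ _ sv_rv) => /ord_LtP; lia.
Qed.

Lemma ranker_eval_rcons w r p : r != [::] ->
  ranker_eval w (rcons r p) = obind (bp_from w p) (ranker_eval w r).
Proof. by case: r => // x r _ /=; rewrite foldl_rcons. Qed.

Lemma samson_wins_ranker (r : seq (bpos Sigma)) : r != [::] ->
  forall u v ru rv i1 i2 j1 j2,
  ranker_eval u r = Some ru -> ranker_eval v r = Some rv ->
  ord i1 ru <> ord j1 rv -> samson_wins u v (size r) i1 i2 j1 j2.
Proof.
elim/last_ind: r => // r p IH _ u v ru rv i1 i2 j1 j2; rewrite size_rcons.
have [-> | r_nil] := eqVneq r [::].
  move=> Eu Ev Hord; rewrite /= !bp_first_origin in Eu Ev.
  have [Vru Vrv] := (bp_from_valid Eu, bp_from_valid Ev).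
  by apply: (samson_wins_bp_from Eu Ev _ _ Hord) => q Vq;
    rewrite !ord_bp_origin.
rewrite !ranker_eval_rcons //.
case Eu': (ranker_eval u r) => [ru'|] //.
case Ev': (ranker_eval v r) => [rv'|] //.
move=> /= Eu Ev Hord; apply: (samson_wins_bp_from Eu Ev _ _ Hord) => q Vq Hq;
  by apply/samson_wins_swap_pebbles/(IH r_nil _ _ _ _ _ _ _ _ Eu' Ev').
Qed.

End Game.

Theorem lemma3p5 (Sigma : finType) (n : nat) (u v : seq Sigma)
    (r : seq (bool * Sigma)) (i1 i2 j1 j2 : nat) :
  0 < n ->
  in_R n u r -> in_R n v r ->
  valid_pos u i1 -> valid_pos u i2 ->
  valid_pos v j1 -> valid_pos v j2 ->
  ord i1 (odflt 0 (ranker_eval u r)) <> ord j1 (odflt 0 (ranker_eval v r)) ->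
  samson_wins u v n i1 i2 j1 j2.
Proof.
move=> n_gt0 [size_r def_u] [_ def_v] _ _ _ _.
case Eu: (ranker_eval u r) def_u => [ru|] // _.
case Ev: (ranker_eval v r) def_v => [rv|] // _ /= Hord.
have r_nil : r != [::] by rewrite -size_eq0 size_r -lt0n.
by rewrite -size_r; apply: samson_wins_ranker Eu Ev Hord.
Qed.
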